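(* Let $k\ge1$ be an integer, $\mathbf G$ an abelian group, $A,C\subseteq\mathbf G$ finite and $B\subseteq\mathbf G^k$ finite. Then $$|A|\cdot|B+\Delta(C)|\le|B+\Delta(A)|\cdot|A+C|.$$
   Context: $\Delta(S)=\{(s,\dots,s)\in\mathbf G^k:s\in S\}$ for $S\subseteq\mathbf G$; sums of subsets of $\mathbf G^k$ are coordinatewise. *)

From HB Require Import structures.
From mathcomp Require Import all_boot all_order all_algebra.
From mathcomp Require Import finmap.
Set Implicit Arguments. Unset Strict Implicit. Unset Printing Implicit Defensive.
Import GRing.Theory.
Local Open Scope ring_scope.
Local Open Scope fset_scope.

Definition sumset (V : zmodType) (X Y : {fset V}) : {fset V} :=
  [fset (x + y)%R | x in X, y in Y].

(* Diagonal embedding Δ(S) = {(s,...,s) : s ∈ S} ⊆ G^k, with G^k = 'rV[G]_k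
   (coordinatewise addition). *)
Definition diag (G : zmodType) (k : nat) (S : {fset G}) : {fset 'rV[G]_k} :=
  [fset (const_mx s : 'rV[G]_k) | s in S].

(* Petridis' method.  Pick a nonempty X ⊆ Δ(A) minimising |X + B| / |X|.  For
   such an X, Petridis' lemma gives |X + B + Z| |X| <= |X + B| |X + Z| for every
   finite Z; take Z = Δ(C).  Then |B + Δ(C)| <= |X + B + Δ(C)| by translation,
   X + Δ(C) ⊆ Δ(A + C), and |X + B| |A| <= |Δ(A) + B| |X| by the choice of X. *)
From HB Require Import structures.
From mathcomp Require Import all_boot all_order all_algebra.
From mathcomp Require Import finmap zify.
Import GRing.Theory.
Local Open Scope fset_scope.
Local Open Scope ring_scope.

Section Sumset.
Context {V : zmodType}.
Implicit Types X Y Z : {fset V}.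

Lemma sumsetP X Y u :
  reflect (exists2 x, x \in X & exists2 y, y \in Y & u = x + y) (u \in sumset X Y).
Proof. exact: imfset2P. Qed.

Lemma mem_sumset X Y x y : x \in X -> y \in Y -> x + y \in sumset X Y.
Proof. by move=> xX yY; apply/sumsetP; exists x => //; exists y. Qed.

Lemma sumsetC X Y : sumset X Y = sumset Y X.
Proof.
by apply/fsetP => u; apply/sumsetP/sumsetP => -[x xX [y yY ->]];
  exists y => //; exists x => //; rewrite addrC.
Qed.

Lemma sumsetA X Y Z : sumset (sumset X Y) Z = sumset X (sumset Y Z).
Proof.
apply/fsetP => u; apply/sumsetP/sumsetP.
  move=> [_ /sumsetP[x xX [y yY ->]] [z zZ ->]].
  by exists x => //; exists (y + z); rewrite ?mem_sumset ?addrA.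
move=> [x xX [_ /sumsetP[y yY [z zZ ->]] ->]].
by exists (x + y); rewrite ?mem_sumset //; exists z; rewrite ?addrA.
Qed.

Lemma sumset0 X : sumset X fset0 = fset0.
Proof. by apply/fsetP => u; rewrite in_fset0; apply/sumsetP => -[x _ [y]]. Qed.

Lemma sumsetSl X X' Y : X `<=` X' -> sumset X Y `<=` sumset X' Y.
Proof.
move=> /fsubsetP sXX'; apply/fsubsetP => _ /sumsetP[x xX [y yY ->]].
by rewrite mem_sumset ?sXX'.
Qed.

Lemma card_translate Y x : #|` [fset x + y | y in Y]| = #|` Y|.
Proof. by rewrite card_in_imfset // => y y' _ _ /addrI. Qed.

Lemma leq_card_sumsetr X Y x : x \in X -> (#|` Y| <= #|` sumset X Y|)%N.
Proof.
move=> xX; rewrite -(card_translate Y x); apply: fsubset_leq_card.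
by apply/fsubsetP => _ /imfsetP[y /= yY ->]; rewrite mem_sumset.
Qed.

End Sumset.

Section Petridis.
Context {V : zmodType}.
Implicit Types X Y Z W : {fset V}.

Definition ratio_minimal X Y := forall W, W `<=` X -> W != fset0 ->
  (#|` sumset X Y| * #|` W| <= #|` sumset W Y| * #|` X|)%N.

Lemma exists_ratio_minimal Y X : X != fset0 ->
  exists2 X', (X' `<=` X) && (X' != fset0) &
    ratio_minimal X' Y /\ (#|` sumset X' Y| * #|` X| <= #|` sumset X Y| * #|` X'|)%N.
Proof.
elim/finSet_rect: X => X IH X0.
pose improves W := (W != fset0) &&
  (#|` sumset W Y| * #|` X| < #|` sumset X Y| * #|` W|)%N.
have [/hasP[W] | noW] := boolP (has improves (fpowerset X)); last first.
  exists X; rewrite ?fsubset_refl ?X0 //; split; last by rewrite mulnC.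
  move=> W WX W0; move/hasPn: noW => /(_ W); rewrite fpowersetE /improves W0.
  by rewrite -leqNgt => ->.
rewrite fpowersetE => WX /andP[W0 ltW].
have WltX : W `<` X.
  rewrite fproperEneq WX andbT; apply: contraTneq ltW => ->.
  by rewrite mulnC ltnn.
have [X' /andP[X'W X'0] [minX' leX']] := IH W WltX W0.
exists X'; first by rewrite (fsubset_trans X'W WX).
split=> //; have W_gt0 : (0 < #|` W|)%N by rewrite cardfs_gt0.
rewrite -(leq_pmul2r W_gt0).
have := leq_mul leX' (leqnn #|` X|); have := leq_mul (ltnW ltW) (leqnn #|` X'|).
lia.
Qed.

Lemma petridis_step X Y Z z : exists2 W, W `<=` X &
  (#|` sumset (sumset X Y) (z |` Z)| + #|` sumset W Y|
     <= #|` sumset (sumset X Y) Z| + #|` sumset X Y|)%N /\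
  (#|` sumset X Z| + #|` X| <= #|` sumset X (z |` Z)| + #|` W|)%N.
Proof.
set S := sumset (sumset X Y) Z.
(* Only (X + Y \ W + Y) + z can be new in X + Y + (z |` Z), while (X \ W) + z
   is new in X + (z |` Z). *)
pose W := [fset x in X | all (fun y => x + y + z \in S) Y].
have WX : W `<=` X by apply/fsubsetP => x; rewrite in_fset inE => /andP[].
exists W => //; split.
  have cover : sumset (sumset X Y) (z |` Z) `<=`
      S `|` [fset z + v | v in sumset X Y `\` sumset W Y].
    apply/fsubsetP => _ /sumsetP[v vXY [z' /fset1UP[-> | z'Z] ->]]; last first.
      by rewrite in_fsetU mem_sumset.
    rewrite in_fsetU; have [/sumsetP[w wW [y yY ->]] | vWY] := boolP (v \in sumset W Y).
      by move: wW; rewrite in_fset inE => /andP[_ /allP->].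
    by apply/orP; right; rewrite addrC in_imfset //= in_fsetD vWY.
  have := leq_trans (fsubset_leq_card cover) (leq_card_fsetU _ _).
  rewrite card_translate cardfsDS ?sumsetSl //.
  have := fsubset_leq_card (sumsetSl _ _ Y WX); lia.
pose I : {fset V} := [fset z + x | x in X `\` W].
have disj : I `&` sumset X Z = fset0.
  apply/fsetP => u; rewrite in_fsetI in_fset0.
  apply/negbTE/andP => -[/imfsetP[x /= + ->] /sumsetP[x' x'X [z' z'Z e]]].
  rewrite in_fsetD => /andP[/negP xW xX]; apply: xW.
  rewrite in_fset inE xX; apply/allP => y yY.
  have -> : x + y + z = x' + y + z' by rewrite addrAC [x + z]addrC e addrAC.
  by rewrite !mem_sumset.
have sub : I `|` sumset X Z `<=` sumset X (z |` Z).
  apply/fsubsetP => u; rewrite in_fsetU.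
  case/orP => [/imfsetP[x /= /fsetDP[xX _] ->] | /sumsetP[x xX [z' z'Z ->]]].
    by rewrite addrC mem_sumset ?fset1U1.
  by rewrite mem_sumset ?fset1Ur.
have cardI : #|` I| = (#|` X| - #|` W|)%N.
  by rewrite card_translate cardfsDS.
have := fsubset_leq_card sub; rewrite cardfsU disj cardfs0 subn0 cardI.
have := fsubset_leq_card WX; lia.
Qed.

Lemma petridis X Y Z : ratio_minimal X Y ->
  (#|` sumset (sumset X Y) Z| * #|` X| <= #|` sumset X Y| * #|` sumset X Z|)%N.
Proof.
move=> minX; elim/fset1U_rect: Z => [|z Z _ IH]; first by rewrite sumset0 cardfs0.
have [W WX [upper lower]] := petridis_step X Y Z z.
have ratioW : (#|` sumset X Y| * #|` W| <= #|` sumset W Y| * #|` X|)%N.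
  have [-> | W0] := eqVneq W fset0; first by rewrite cardfs0 muln0.
  exact: minX.
have := leq_mul upper (leqnn #|` X|); have := leq_mul (leqnn #|` sumset X Y|) lower.
rewrite !mulnDl !mulnDr; lia.
Qed.

End Petridis.

Section Diagonal.
Context {G : zmodType} (k : nat).

Lemma card_diag (S : {fset G}) : (0 < k)%N -> #|` diag k S| = #|` S|.
Proof.
move=> k_gt0; rewrite card_in_imfset // => a b _ _ /matrixP/(_ 0 (Ordinal k_gt0)).
by rewrite !mxE.
Qed.

Lemma sumset_diag (S T : {fset G}) : sumset (diag k S) (diag k T) = diag k (sumset S T).
Proof.
have diagD a b : const_mx a + const_mx b = const_mx (a + b) :> 'rV[G]_k.
  by apply/matrixP => i j; rewrite !mxE.
apply/fsetP => u; apply/sumsetP/imfsetP => /=.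
  by move=> [_ /imfsetP[a /= aS ->] [_ /imfsetP[b /= bT ->] ->]];
    exists (a + b); rewrite ?mem_sumset.
move=> [_ /sumsetP[a aS [b bT ->]] ->].
by exists (const_mx a); rewrite ?in_imfset //; exists (const_mx b); rewrite ?in_imfset.
Qed.

End Diagonal.

Theorem corollary36 (G : zmodType) (k : nat) (hk : (1 <= k)%N)
  (A C : {fset G}) (B : {fset 'rV[G]_k}) :
  (#|` A| * #|` sumset B (diag k C)| <=
   #|` sumset B (diag k A)| * #|` sumset A C|)%N.
Proof.
have [-> | A0] := eqVneq A fset0; first by rewrite cardfs0.
have DA0 : diag k A != fset0 by rewrite -cardfs_gt0 card_diag // cardfs_gt0.
have [X /andP[XDA X0] [minX ratioX]] := exists_ratio_minimal B _ DA0.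
have [x xX] := fset0Pn X X0.
have transl : (#|` sumset B (diag k C)| <= #|` sumset (sumset X B) (diag k C)|)%N.
  by rewrite sumsetA (leq_card_sumsetr _ _ _ xX).
have XC : (#|` sumset X (diag k C)| <= #|` sumset A C|)%N.
  rewrite -(card_diag k (sumset A C) hk) -sumset_diag.
  by apply: fsubset_leq_card; apply: sumsetSl.
rewrite card_diag // (sumsetC (diag k A)) in ratioX.
have m_gt0 : (0 < #|` X|)%N by rewrite cardfs_gt0.
rewrite -(leq_pmul2r m_gt0).
have := leq_mul (leqnn #|` A|) (leq_mul transl (leqnn #|` X|)).
have := leq_mul (leqnn #|` A|) (petridis _ _ (diag k C) minX).
have := leq_mul ratioX XC.
lia.
Qed.
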